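(* Consider the Robust protocol with parameters $k,\varepsilon,c$ (described in the context) run on any event stream chosen by a white-box adaptive adversary. Let $R_N$ be the number of rounds the protocol performs to process the first $N$ events. Then \[ \mathbb E[R_N]=\Theta\!\left(\frac{\log N}{\log\!\left(1+\frac{\sqrt k\,\varepsilon}{c}\right)}\right). \] Moreover, for any $\delta\in(0,1)$, with probability at least $1-\delta$, \[ R_N=O\!\left(\frac{\log N}{\log\!\left(1+\frac{\sqrt k\,\varepsilon}{c}\right)}+\log\frac1\delta\right), \] where the implicit constant is absolute and independent of $\delta,\varepsilon,k,N$.
   Context: Distributed counting: a server and $k$ sites; events arrive one at a time, each at some site; $n_i$ is the number of events at site $i$ so far. Robust protocol with parameters $k$, $\varepsilon>0$, $c\ge1$: each site $i$ keeps a transmission probability $p$ (initially $1$, updated by server broadcasts) and its count $n_i$. On each event at site $i$: $n_i\gets n_i+1$, and independently with probability $p$ the site sends ReportSample to the server. On receiving CountRequest, site $i$ sends its current $n_i$. The server keeps a counter $B=0$, values $\bar n_i=0$, and $p=1$; its estimate is $\hat n=\bar n+B/p$ with $\bar n=\sum_i\bar n_i$. On receiving ReportSample the server sets $B\gets B+1$; if now $B=k$, the round ends and a new round begins: the server broadcasts CountRequest, sets each $\bar n_i$ to the reported exact $n_i$, sets $p\gets\min\{1,c\sqrt k/(\varepsilon\bar n)\}$, broadcasts $p$, and sets $B\gets0$. A white-box adaptive adversary chooses the site of each next event as an arbitrary function of the full history of states, realized randomness and messages. *)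

From Stdlib Require Import Reals Lra Lia List.
Import ListNotations.
Open Scope R_scope.

(** Robust distributed-counting protocol (k sites, one server).
    Sites are indexed by natural numbers 0 .. k-1. *)

Record state := mkState {
  cnt   : nat -> nat;
  nbarS : nat -> nat;   (* \bar n_i : last reported count of site i at the server *)
  Bctr  : nat;
  prob  : R;            (* current transmission probability p (server = sites) *)
  rounds : nat
}.

Definition init_state : state :=
  mkState (fun _ => 0%nat) (fun _ => 0%nat) 0%nat 1 0%nat.

Definition sum_sites (k : nat) (f : nat -> nat) : nat :=
  fold_right Nat.add 0%nat (map f (seq 0 k)).

Definition upd (f : nat -> nat) (i v : nat) : nat -> nat :=
  fun j => if Nat.eqb j i then v else f j.

Definition estimate (k : nat) (s : state) : R :=
  INR (sum_sites k (nbarS s)) + INR (Bctr s) / prob s.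

(** One event at site [i]; [b] is the realized outcome of the site's
    Bernoulli(p) coin deciding whether ReportSample is sent. *)
Definition step (k : nat) (eps c : R) (s : state) (i : nat) (b : bool) : state :=
  let n' := upd (cnt s) i (S (cnt s i)) in
  if b then
    let B' := S (Bctr s) in
    if Nat.eqb B' k then
      (* round ends: CountRequest, exact counts reported, p recomputed, B reset *)
      let nb := INR (sum_sites k n') in
      mkState n' n' 0%nat (Rmin 1 (c * sqrt (INR k) / (eps * nb))) (S (rounds s))
    else mkState n' (nbarS s) B' (prob s) (rounds s)
  else mkState n' (nbarS s) (Bctr s) (prob s) (rounds s).

(** History of the run: chronological list of (site of the event, coin outcome).
    Everything else (states, messages) is a deterministic function of it. *)
Definition history := list (nat * bool).

(** A (white-box, adaptive, deterministic) adversary: chooses the site of the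
    next event as a function of the full history. *)
Definition adversary := history -> nat.

Fixpoint expect (k : nat) (eps c : R) (adv : adversary) (N : nat)
    (h : history) (s : state) (g : state -> R) : R :=
  match N with
  | O => g s
  | S N' =>
      let i := adv h in
      prob s * expect k eps c adv N' (h ++ [(i, true)]) (step k eps c s i true) g
      + (1 - prob s) * expect k eps c adv N' (h ++ [(i, false)]) (step k eps c s i false) g
  end.

Definition ERounds (k : nat) (eps c : R) (adv : adversary) (N : nat) : R :=
  expect k eps c adv N [] init_state (fun s => INR (rounds s)).

Definition PRoundsLe (k : nat) (eps c : R) (adv : adversary) (N : nat) (x : R) : R :=
  expect k eps c adv N [] init_state
    (fun s => if Rle_dec (INR (rounds s)) x then 1 else 0).

Definition rate (k : nat) (eps c : R) (N : nat) : R :=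
  ln (INR N) / ln (1 + sqrt (INR k) * eps / c).

(* While the reported count is below [threshold = c sqrt k / eps] every event is
   reported, so rounds last [k] events and there are at most [threshold / k] of them.
   Afterwards [p = threshold / nbar], a round collects [k] reports, i.e. about
   [k / p = growth * nbar] events with [growth = sqrt k eps / c], so each round
   multiplies the count by about [1 + growth] and [R_N] is about
   [ln N / ln (1 + growth)].  Both bounds come from potentials that are
   supermartingales whatever site the adversary picks, because the coin of an event
   and the growth of the count do not depend on the site: by concavity of [ln],
   [ln (n + (k - B) / p) - ln (1 + growth) * R] bounds [E R_N] from below; and for a
   small [theta] and a suitable [beta],
   [exp (theta R) (n + beta (k - B) / p) ^ (- 1 / ln (1 + growth))] bounds
   [E exp (theta R_N)] by [O(N ^ (1 / ln (1 + growth)))], which gives the mean by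
   Jensen and the tail by Markov. *)

From Stdlib Require Import Reals Lra Lia List.
Import ListNotations.
Open Scope R_scope.

(** * Elementary inequalities *)

Lemma ln_le x y : 0 < x -> x <= y -> ln x <= ln y.
Proof.
  intros Hx [Hxy | ->]; [left; apply ln_increasing|]; lra.
Qed.

Lemma exp_le x y : x <= y -> exp x <= exp y.
Proof. intros [Hxy | ->]; [left; apply exp_increasing|]; lra. Qed.

Lemma exp_le_1 y : y <= 0 -> exp y <= 1.
Proof. intros Hy. rewrite <- exp_0. apply exp_le, Hy. Qed.

Lemma ln_nonneg y : 1 <= y -> 0 <= ln y.
Proof. intros Hy. rewrite <- ln_1. apply ln_le; lra. Qed.

Lemma ln_pos y : 1 < y -> 0 < ln y.
Proof. intros Hy. rewrite <- ln_1. apply ln_increasing; lra. Qed.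

Lemma ln_0 : ln 0 = 0.
Proof. unfold ln. case Rlt_dec; intros H; [destruct (Rlt_irrefl 0 H) | reflexivity]. Qed.

Lemma ln_div x y : 0 < x -> 0 < y -> ln (x / y) = ln x - ln y.
Proof.
  intros Hx Hy. unfold Rdiv.
  rewrite ln_mult, ln_Rinv; [ring | lra | lra | apply Rinv_0_lt_compat; lra].
Qed.

Lemma ln_le_sub_1 y : 0 < y -> ln y <= y - 1.
Proof. intros Hy. pose proof (exp_ineq1_le (ln y)) as H. rewrite exp_ln in H; lra. Qed.

Lemma ln_1p_ge y : 0 <= y -> y / (1 + y) <= ln (1 + y).
Proof.
  intros Hy. pose proof (ln_le_sub_1 (/ (1 + y))) as H.
  rewrite ln_Rinv in H by lra.
  assert (/ (1 + y) - 1 = - (y / (1 + y))) by (field; lra).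
  assert (0 < / (1 + y)) by (apply Rinv_0_lt_compat; lra). lra.
Qed.

Lemma ln_succ_sub_ge M : 0 < M -> 1 / (M + 1) <= ln (M + 1) - ln M.
Proof.
  intros HM. rewrite <- ln_div by lra.
  replace ((M + 1) / M) with (1 + 1 / M) by (field; lra).
  replace (1 / (M + 1)) with (1 / M / (1 + 1 / M)) by (field; lra).
  apply ln_1p_ge. unfold Rdiv. rewrite Rmult_1_l. left; apply Rinv_0_lt_compat, HM.
Qed.

Lemma exp_sub_1_le a : exp a - 1 <= a * exp a.
Proof.
  pose proof (exp_ineq1_le (- a)). pose proof (exp_pos a).
  assert (exp (- a) * exp a = 1) by (rewrite <- exp_plus, Rplus_opp_l; apply exp_0).
  nra.
Qed.

Lemma one_sub_exp_opp_ge d : 0 <= d -> d / (1 + d) <= 1 - exp (- d).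
Proof.
  intros Hd. pose proof (exp_ineq1_le d). pose proof (exp_pos d).
  assert (exp (- d) * exp d = 1) by (rewrite <- exp_plus, Rplus_opp_l; apply exp_0).
  assert (exp (- d) * (1 + d) <= 1) by nra.
  apply Rmult_le_reg_r with (1 + d); [lra|].
  replace (d / (1 + d) * (1 + d)) with d by (field; lra). nra.
Qed.

Lemma ln_concave p a b : 0 <= p <= 1 -> 0 < a -> 0 < b ->
  p * ln a + (1 - p) * ln b <= ln (p * a + (1 - p) * b).
Proof.
  intros Hp Ha Hb. set (m := p * a + (1 - p) * b).
  assert (Hm : 0 < m) by (unfold m; nra).
  pose proof (ln_le_sub_1 (a / m) ltac:(apply Rdiv_lt_0_compat; lra)) as H1.
  pose proof (ln_le_sub_1 (b / m) ltac:(apply Rdiv_lt_0_compat; lra)) as H2.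
  rewrite ln_div in H1, H2 by lra.
  assert (p * (a / m - 1) + (1 - p) * (b / m - 1) = 0) by (unfold m in *; field; lra).
  nra.
Qed.

Lemma ln_1p_half y : 0 <= y -> ln (1 + y) / 2 <= ln (1 + y / 2).
Proof.
  intros Hy.
  assert (H : ln (1 + y) <= ln ((1 + y / 2) * (1 + y / 2))) by (apply ln_le; nra).
  rewrite ln_mult in H by lra. lra.
Qed.

Lemma ln_1p_div_64 y : 0 <= y -> ln (1 + y) / 64 <= ln (1 + y / 64).
Proof.
  intros Hy.
  pose proof (ln_1p_half y Hy). pose proof (ln_1p_half (y / 2) ltac:(lra)).
  pose proof (ln_1p_half (y / 4) ltac:(lra)). pose proof (ln_1p_half (y / 8) ltac:(lra)).
  pose proof (ln_1p_half (y / 16) ltac:(lra)). pose proof (ln_1p_half (y / 32) ltac:(lra)).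
  replace (y / 2 / 2) with (y / 4) in * by field.
  replace (y / 4 / 2) with (y / 8) in * by field.
  replace (y / 8 / 2) with (y / 16) in * by field.
  replace (y / 16 / 2) with (y / 32) in * by field.
  replace (y / 32 / 2) with (y / 64) in * by field.
  lra.
Qed.

(* Both sides are compared with [ln (sqrt (1 + x))], using [ln (1 + x) <= sqrt (1 + x)]. *)
Lemma ln_1p_div_1p_ln x : 0 < x -> ln (1 + x) / 2 <= ln (1 + x / (1 + ln (1 + x))).
Proof.
  intros Hx. set (L := ln (1 + x)). set (s := sqrt (1 + x)).
  assert (Hs2 : s * s = 1 + x) by (apply sqrt_sqrt; lra).
  assert (Hs1 : 1 <= s) by (rewrite <- sqrt_1; apply sqrt_le_1_alt; lra).
  assert (HLs : L = 2 * ln s) by (unfold L; rewrite <- Hs2, ln_mult by lra; ring).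
  assert (HL0 : 0 < L) by (apply ln_pos; lra).
  assert (Hsl : ln s <= s / 2).
  { pose proof (ln_le_sub_1 (s / 2) ltac:(lra)) as H. rewrite ln_div in H by lra.
    pose proof (ln_le_sub_1 2 ltac:(lra)). lra. }
  assert (s <= 1 + x / (1 + L)).
  { apply Rmult_le_reg_r with (1 + L); [lra|].
    replace ((1 + x / (1 + L)) * (1 + L)) with (1 + L + x) by (field; lra).
    assert (0 <= (s - 1) * (s - L)) by (apply Rmult_le_pos; lra). nra. }
  assert (ln s <= ln (1 + x / (1 + L))) by (apply ln_le; lra). lra.
Qed.

Lemma ln_INR_eventually_ge Y : exists N0 : nat, forall N : nat, (N0 <= N)%nat ->
  (1 <= N)%nat /\ Y <= ln (INR N).
Proof.
  destruct (INR_unbounded (exp Y)) as [N0 HN0]. exists N0. intros N HN.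
  apply le_INR in HN. pose proof (exp_pos Y).
  split.
  - destruct N; [simpl in HN; lra | lia].
  - rewrite <- (ln_exp Y). apply ln_le; lra.
Qed.

Lemma sum_sites_S k f : sum_sites (S k) f = (sum_sites k f + f k)%nat.
Proof.
  unfold sum_sites. rewrite seq_S, map_app, fold_right_app. simpl.
  induction (map f (seq 0 k)); simpl; lia.
Qed.

Lemma sum_sites_ext k f g :
  (forall j, (j < k)%nat -> f j = g j) -> sum_sites k f = sum_sites k g.
Proof.
  induction k as [|k IH]; intros H; [reflexivity|].
  rewrite !sum_sites_S, (H k (Nat.lt_succ_diag_r k)), IH; [reflexivity|].
  intros j Hj. apply H. lia.
Qed.

Lemma sum_sites_zero k : sum_sites k (fun _ => 0%nat) = 0%nat.
Proof. induction k as [|k IH]; [reflexivity|]. rewrite sum_sites_S, IH. reflexivity. Qed.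

Lemma sum_sites_upd_S k f i :
  (i < k)%nat -> sum_sites k (upd f i (S (f i))) = S (sum_sites k f).
Proof.
  induction k as [|k IH]; intros Hi; [lia|]. rewrite !sum_sites_S.
  unfold upd at 2. destruct (Nat.eqb_spec k i) as [-> | Hne].
  - rewrite (sum_sites_ext i _ f); [lia|].
    intros j Hj. unfold upd. destruct (Nat.eqb_spec j i); [lia | reflexivity].
  - rewrite IH by lia. lia.
Qed.

Definition total (k : nat) (s : state) : nat := sum_sites k (cnt s).
Definition reported (k : nat) (s : state) : nat := sum_sites k (nbarS s).

Lemma total_step k eps c s i b :
  (i < k)%nat -> total k (step k eps c s i b) = S (total k s).
Proof.
  intros Hi. unfold step, total.
  destruct b; [destruct (Nat.eqb (S (Bctr s)) k)|]; apply sum_sites_upd_S, Hi.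
Qed.

(** * The expectation operator *)

Definition prob_valid (s : state) : Prop := 0 <= prob s <= 1.

Lemma step_prob_valid k eps c s i b : 0 <= c -> 0 < eps ->
  prob_valid s -> prob_valid (step k eps c s i b).
Proof.
  intros Hc He Hp. unfold step, prob_valid in *.
  destruct b; [destruct (Nat.eqb (S (Bctr s)) k)|]; simpl; try lra.
  set (n := INR (sum_sites k (upd (cnt s) i (S (cnt s i))))).
  assert (0 <= c * sqrt (INR k) / (eps * n)).
  { apply Rmult_le_pos; [apply Rmult_le_pos; [lra | apply sqrt_pos]|].
    destruct (pos_INR (sum_sites k (upd (cnt s) i (S (cnt s i))))) as [Hn | Hn]; fold n in Hn.
    - left. apply Rinv_0_lt_compat, Rmult_lt_0_compat; lra.
    - rewrite <- Hn, Rmult_0_r, Rinv_0. lra. }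
  split; [apply Rmin_glb; lra | apply Rmin_l].
Qed.

Section Expectation.
Variables (k : nat) (eps c : R) (adv : adversary).
Hypothesis adv_valid : forall h, (adv h < k)%nat.
Hypotheses (c_ge0 : 0 <= c) (eps_gt0 : 0 < eps).

Notation E := (expect k eps c adv).

Lemma expect_ext N : forall h s g g',
  (forall s', total k s' = (total k s + N)%nat -> g s' = g' s') ->
  E N h s g = E N h s g'.
Proof.
  induction N as [|N IH]; intros h s g g' H; cbn [expect].
  - apply H. lia.
  - f_equal; f_equal; apply IH; intros s' Hs'; apply H;
      rewrite total_step in Hs' by apply adv_valid; lia.
Qed.

Lemma expect_affine N : forall h s g a b,
  E N h s (fun s => a * g s + b) = a * E N h s g + b.
Proof. induction N as [|N IH]; intros; cbn [expect]; [|rewrite !IH]; ring. Qed.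

Lemma expect_mono N : forall h s g1 g2, prob_valid s -> (forall s, g1 s <= g2 s) ->
  E N h s g1 <= E N h s g2.
Proof.
  induction N as [|N IH]; intros h s g1 g2 Hp H; cbn [expect]; [apply H|].
  pose proof (step_prob_valid k eps c s (adv h) true c_ge0 eps_gt0 Hp).
  pose proof (step_prob_valid k eps c s (adv h) false c_ge0 eps_gt0 Hp).
  destruct Hp. apply Rplus_le_compat; apply Rmult_le_compat_l; auto; lra.
Qed.

Lemma expect_pos N : forall h s g, prob_valid s -> (forall s, 0 < g s) -> 0 < E N h s g.
Proof.
  induction N as [|N IH]; intros h s g Hp H; cbn [expect]; [apply H|].
  pose proof (IH (h ++ [(adv h, true)]) _ g
    (step_prob_valid k eps c s (adv h) true c_ge0 eps_gt0 Hp) H).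
  pose proof (IH (h ++ [(adv h, false)]) _ g
    (step_prob_valid k eps c s (adv h) false c_ge0 eps_gt0 Hp) H).
  destruct Hp. nra.
Qed.

Lemma expect_le_ln_expect_exp N : forall h s f, prob_valid s ->
  E N h s f <= ln (E N h s (fun s => exp (f s))).
Proof.
  induction N as [|N IH]; intros h s f Hp; cbn [expect]; [rewrite ln_exp; lra|].
  set (st := step k eps c s (adv h) true). set (sf := step k eps c s (adv h) false).
  assert (Ht : prob_valid st) by (apply step_prob_valid; auto).
  assert (Hf : prob_valid sf) by (apply step_prob_valid; auto).
  pose proof (IH (h ++ [(adv h, true)]) st f Ht).
  pose proof (IH (h ++ [(adv h, false)]) sf f Hf).
  pose proof (expect_pos N (h ++ [(adv h, true)]) st _ Ht (fun s => exp_pos (f s))).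
  pose proof (expect_pos N (h ++ [(adv h, false)]) sf _ Hf (fun s => exp_pos (f s))).
  eapply Rle_trans; [|apply ln_concave; auto]. destruct Hp. nra.
Qed.

(* A branch of probability zero need not preserve [Inv]. *)
Lemma expect_le_supermartingale (Inv : state -> Prop) (Phi g : state -> R) :
  (forall s, Inv s -> prob_valid s) ->
  (forall s i, Inv s -> (i < k)%nat -> prob s <> 0 -> Inv (step k eps c s i true)) ->
  (forall s i, Inv s -> (i < k)%nat -> prob s <> 1 -> Inv (step k eps c s i false)) ->
  (forall s i, Inv s -> (i < k)%nat ->
     prob s * Phi (step k eps c s i true) + (1 - prob s) * Phi (step k eps c s i false)
     <= Phi s) ->
  (forall s, Inv s -> g s <= Phi s) ->
  forall N h s, Inv s -> E N h s g <= Phi s.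
Proof.
  intros Hvalid Htrue Hfalse Hsuper Hg.
  induction N as [|N IH]; intros h s Hs; cbn [expect]; [auto|].
  pose proof (Hsuper s (adv h) Hs (adv_valid h)). destruct (Hvalid s Hs).
  assert (prob s * E N (h ++ [(adv h, true)]) (step k eps c s (adv h) true) g
          <= prob s * Phi (step k eps c s (adv h) true)).
  { destruct (Req_dec (prob s) 0) as [-> | Hp]; [lra|].
    apply Rmult_le_compat_l; [lra|]. apply IH, Htrue; auto. }
  assert ((1 - prob s) * E N (h ++ [(adv h, false)]) (step k eps c s (adv h) false) g
          <= (1 - prob s) * Phi (step k eps c s (adv h) false)).
  { destruct (Req_dec (prob s) 1) as [-> | Hp]; [lra|].
    apply Rmult_le_compat_l; [lra|]. apply IH, Hfalse; auto. }
  lra.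
Qed.

End Expectation.

(** * One-step drift of the potentials *)

Lemma exp_mix_le p u A d : 0 <= p <= 1 ->
  p * (exp A - 1) <= (1 - p) * (1 - exp (- d)) ->
  p * exp (u + A) + (1 - p) * exp (u - d) <= exp u.
Proof.
  intros Hp H. unfold Rminus at 2. rewrite !exp_plus. pose proof (exp_pos u).
  assert (p * exp A + (1 - p) * exp (- d) <= 1) by nra. nra.
Qed.

Lemma one_sub_exp_ln_succ_ge lam M : 0 < lam -> 0 < M ->
  lam / (M + 1 + lam) <= 1 - exp (- (lam * (ln (M + 1) - ln M))).
Proof.
  intros Hl HM.
  set (d := lam * (ln (M + 1) - ln M)). set (e := lam / (M + 1)).
  assert (He : e <= d).
  { unfold d, e. replace (lam / (M + 1)) with (lam * (1 / (M + 1))) by (field; lra).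
    apply Rmult_le_compat_l; [lra | apply ln_succ_sub_ge, HM]. }
  assert (He0 : 0 < e) by (apply Rdiv_lt_0_compat; lra).
  replace (lam / (M + 1 + lam)) with (e / (1 + e)) by (unfold e; field; lra).
  eapply Rle_trans; [|apply one_sub_exp_opp_ge; lra].
  apply Rmult_le_reg_r with ((1 + e) * (1 + d)); [nra|].
  replace (e / (1 + e) * ((1 + e) * (1 + d))) with (e * (1 + d)) by (field; lra).
  replace (d / (1 + d) * ((1 + e) * (1 + d))) with (d * (1 + e)) by (field; lra). nra.
Qed.

(* Moving from [M] to [M + 1] lowers [M ^ (- lam)] by a factor [1 - lam / (M + 1 + lam)]
   at least; this pays for an increase by a factor [exp A] on an event of probability [p]. *)
Lemma power_potential_step p beta lam M A :
  0 < p < 1 -> beta <= 1 -> 0 < lam -> 0 < M ->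
  A <= 0 \/ (p <= beta /\ p * (exp A - 1) <= (1 - beta) * (lam / (M + 1 + lam))) ->
  p * exp (- lam * ln M + A) + (1 - p) * exp (- lam * ln (M + 1)) <= exp (- lam * ln M).
Proof.
  intros Hp Hb Hl HM HA.
  replace (- lam * ln (M + 1)) with (- lam * ln M - lam * (ln (M + 1) - ln M)) by ring.
  apply exp_mix_le; [lra|].
  pose proof (one_sub_exp_ln_succ_ge lam M Hl HM) as Hd.
  assert (0 < lam / (M + 1 + lam)) by (apply Rdiv_lt_0_compat; lra).
  destruct HA as [HA | [Hpb HA]].
  - pose proof (exp_le_1 A HA). nra.
  - eapply Rle_trans; [exact HA|]. apply Rmult_le_compat; lra.
Qed.

Lemma ln_sub_ln_sub_le M a : 1 < a -> 2 * a <= M ->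
  ln M - ln (M + 1 - a) <= 2 * (a - 1) / M.
Proof.
  intros Ha HM. rewrite <- ln_div by lra.
  eapply Rle_trans; [apply ln_le_sub_1; apply Rdiv_lt_0_compat; lra|].
  replace (M / (M + 1 - a) - 1) with ((a - 1) / (M + 1 - a)) by (field; lra).
  apply Rmult_le_reg_r with ((M + 1 - a) * M); [nra|].
  replace ((a - 1) / (M + 1 - a) * ((M + 1 - a) * M)) with ((a - 1) * M) by (field; lra).
  replace (2 * (a - 1) / M * ((M + 1 - a) * M)) with (2 * (a - 1) * (M + 1 - a))
    by (field; lra).
  nra.
Qed.

Lemma exp_sub_1_le_9 A : 0 <= A <= 2 -> exp A - 1 <= 9 * A.
Proof.
  intros HA. pose proof (exp_sub_1_le A).
  assert (exp A <= 9).
  { eapply Rle_trans; [apply (exp_le A (1 + 1)); lra|].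
    rewrite exp_plus. pose proof exp_le_3. pose proof (exp_pos 1). nra. }
  nra.
Qed.

(* A report inside a round: [M] moves to [M + 1 - a] with probability [p = beta / a]. *)
Lemma power_potential_step_report p a lam beta M :
  0 < p < 1 -> 0 < beta <= 1/64 -> 0 < lam -> p * a = beta ->
  2 * a <= M -> lam * a <= M ->
  p * exp (- lam * ln (M + 1 - a)) + (1 - p) * exp (- lam * ln (M + 1))
  <= exp (- lam * ln M).
Proof.
  intros Hp Hb Hl Hpa H2a Hla.
  assert (Ha0 : 0 < a) by nra.
  set (A := lam * (ln M - ln (M + 1 - a))).
  replace (- lam * ln (M + 1 - a)) with (- lam * ln M + A) by (unfold A; ring).
  apply (power_potential_step p beta); try lra.
  destruct (Rle_dec a 1) as [Ha1 | Ha1].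
  - left. unfold A. assert (ln M <= ln (M + 1 - a)) by (apply ln_le; lra). nra.
  - right. split; [nra|].
    assert (HA0 : 0 <= A).
    { unfold A. assert (ln (M + 1 - a) <= ln M) by (apply ln_le; lra). nra. }
    assert (HA : A <= lam * (2 * (a - 1) / M)).
    { apply Rmult_le_compat_l; [lra | apply ln_sub_ln_sub_le; lra]. }
    assert (lam * (2 * (a - 1) / M) <= 2).
    { apply Rmult_le_reg_r with M; [lra|].
      replace (lam * (2 * (a - 1) / M) * M) with (2 * (lam * a - lam)) by (field; lra). lra. }
    pose proof (exp_sub_1_le_9 A ltac:(lra)).
    assert (p * (exp A - 1) <= 18 * lam * beta / M).
    { apply Rle_trans with (p * (9 * (lam * (2 * (a - 1) / M)))); [apply Rmult_le_compat_l; lra|].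
      apply Rmult_le_reg_r with M; [lra|].
      replace (p * (9 * (lam * (2 * (a - 1) / M))) * M) with (18 * lam * (p * a - p))
        by (field; lra).
      replace (18 * lam * beta / M * M) with (18 * lam * beta) by (field; lra). nra. }
    assert (18 * lam * beta / M <= (1 - beta) * (lam / (M + 1 + lam))).
    { apply Rmult_le_reg_r with (M * (M + 1 + lam)); [nra|].
      replace (18 * lam * beta / M * (M * (M + 1 + lam)))
        with (18 * lam * beta * (M + 1 + lam)) by (field; lra).
      replace ((1 - beta) * (lam / (M + 1 + lam)) * (M * (M + 1 + lam)))
        with ((1 - beta) * lam * M) by (field; lra).
      assert (lam * 1 < lam * a) by (apply Rmult_lt_compat_l; lra).
      assert (18 * beta * (M + 1 + lam) <= (1 - beta) * M) by nra.
      replace (18 * lam * beta * (M + 1 + lam)) with (lam * (18 * beta * (M + 1 + lam))) by ring.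
      replace ((1 - beta) * lam * M) with (lam * ((1 - beta) * M)) by ring.
      apply Rmult_le_compat_l; lra. }
    lra.
Qed.

Lemma count_le_of_half_ln_lt y n a : 0 < y -> 0 < n -> 0 < a ->
  ln (1 + y) / 2 < ln (1 + a / n) -> n <= 2 * a / y + 2 * a.
Proof.
  intros Hy Hn Ha H.
  pose proof (ln_1p_ge y ltac:(lra)).
  pose proof (ln_le_sub_1 (1 + a / n) ltac:(apply Rplus_lt_0_compat; [lra | apply Rdiv_lt_0_compat; lra])).
  assert (Hlt : y / (1 + y) < 2 * (a / n)) by lra.
  apply Rmult_le_reg_r with (y / (1 + y) / n); [apply Rdiv_lt_0_compat; [apply Rdiv_lt_0_compat|]; lra|].
  replace (n * (y / (1 + y) / n)) with (y / (1 + y)) by (field; lra).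
  replace ((2 * a / y + 2 * a) * (y / (1 + y) / n)) with (2 * (a / n)) by (field; lra).
  lra.
Qed.

Lemma round_end_drift_bound theta beta lam x a n :
  0 < theta <= 1/256 -> 0 < beta <= 1/64 -> beta <= lam / 64 -> 0 < x -> 1 <= lam * x ->
  1 < a -> 0 < n -> n <= 2 * a / (beta * x) + 2 * a ->
  3 * theta * beta / a <= (1 - beta) * (lam / (n + a + 1 + lam)).
Proof.
  intros Ht Hb Hbl Hx Hlx Ha Hn0 Hn.
  assert (Hl : 0 < lam) by lra.
  apply Rmult_le_reg_r with (a * (n + a + 1 + lam)); [nra|].
  replace (3 * theta * beta / a * (a * (n + a + 1 + lam)))
    with (3 * theta * beta * (n + a + 1 + lam)) by (field; lra).
  replace ((1 - beta) * (lam / (n + a + 1 + lam)) * (a * (n + a + 1 + lam)))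
    with ((1 - beta) * (lam * a)) by (field; lra).
  assert (Hsum : beta * (n + a + 1 + lam) <= a * (2 / x + 4 * beta + beta * lam)).
  { replace (a * (2 / x + 4 * beta + beta * lam))
      with (beta * (2 * a / (beta * x) + 2 * a + 2 * a + a * lam)) by (field; lra).
    apply Rmult_le_compat_l; nra. }
  assert (2 / x <= 2 * lam).
  { apply Rmult_le_reg_r with x; [lra|]. replace (2 / x * x) with 2 by (field; lra). lra. }
  assert (beta * lam <= lam / 64) by nra.
  assert (beta * (n + a + 1 + lam) <= a * (133 / 64 * lam)) by nra.
  assert (theta * (lam * a) <= 1/256 * (lam * a)) by (apply Rmult_le_compat_r; nra).
  assert (beta * (lam * a) <= 1/64 * (lam * a)) by (apply Rmult_le_compat_r; nra).
  assert (3 * theta * (beta * (n + a + 1 + lam)) <= 3 * theta * (a * (133 / 64 * lam)))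
    by (apply Rmult_le_compat_l; lra).
  nra.
Qed.

(* End of a round: the report has probability [p = beta / a] and the new potential is
   based on [(n + 1) (1 + beta x)], one factor [exp theta] higher. *)
Lemma power_potential_step_round_end p a lam beta theta x n :
  0 < p < 1 -> 0 < beta <= 1/64 -> beta <= lam / 64 -> 0 < x -> 1 <= lam * x ->
  0 < theta <= 1/256 -> 2 * theta <= lam * ln (1 + beta * x) ->
  p * a = beta -> 0 < n -> a <= beta * x * n ->
  p * exp (theta - lam * ln (1 + beta * x) - lam * ln (n + 1))
    + (1 - p) * exp (- lam * ln (n + a + 1))
  <= exp (- lam * ln (n + a)).
Proof.
  intros Hp Hb Hbl Hx Hlx Ht Hg Hpa Hn Han.
  assert (Hl : 0 < lam) by nra.
  assert (Ha0 : 0 < a) by nra.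
  set (G := lam * ln (1 + beta * x)) in *.
  set (A := theta - G + lam * (ln (n + a) - ln (n + 1))).
  replace (theta - G - lam * ln (n + 1)) with (- lam * ln (n + a) + A) by (unfold A; ring).
  apply (power_potential_step p beta); try lra.
  destruct (Rle_dec a 1) as [Ha1 | Ha1].
  { left. unfold A. assert (ln (n + a) <= ln (n + 1)) by (apply ln_le; lra).
    assert (lam * (ln (n + a) - ln (n + 1)) <= lam * 0) by (apply Rmult_le_compat_l; lra).
    lra. }
  set (v := a / n).
  assert (Hv : 0 < v) by (apply Rdiv_lt_0_compat; lra).
  assert (Hvx : v <= beta * x).
  { apply Rmult_le_reg_r with n; [lra|]. unfold v. replace (a / n * n) with a by (field; lra).
    lra. }
  assert (HAv : A <= theta - G + lam * ln (1 + v)).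
  { assert (ln (n + a) - ln n = ln (1 + v))
      by (unfold v; rewrite <- ln_div by lra; f_equal; field; lra).
    assert (ln n <= ln (n + 1)) by (apply ln_le; lra).
    unfold A. apply Rplus_le_compat_l, Rmult_le_compat_l; lra. }
  destruct (Rle_dec (theta - G + lam * ln (1 + v)) 0) as [HA2 | HA2]; [left; lra | right].
  split; [nra|].
  assert (HAt : A <= theta).
  { assert (ln (1 + v) <= ln (1 + beta * x)) by (apply ln_le; lra).
    assert (lam * ln (1 + v) <= G) by (apply Rmult_le_compat_l; lra). lra. }
  assert (HexpA : exp A - 1 <= 3 * theta).
  { pose proof (exp_sub_1_le A). pose proof (exp_pos A).
    assert (exp A <= 3) by (eapply Rle_trans; [apply exp_le | apply exp_le_3]; lra).
    destruct (Rle_dec A 0); nra. }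
  assert (Hnb : n <= 2 * a / (beta * x) + 2 * a).
  { apply count_le_of_half_ln_lt; [nra | lra | lra |].
    apply Rmult_lt_reg_l with lam; [lra|]. unfold G, v in *. lra. }
  eapply Rle_trans; [|apply (round_end_drift_bound theta beta lam x a n); lra].
  replace (3 * theta * beta / a) with (p * (3 * theta)) by (rewrite <- Hpa; field; lra).
  apply Rmult_le_compat_l; lra.
Qed.

Definition theta : R := 1 / 256.
Definition lam_of (x : R) : R := 1 / ln (1 + x).
(* Small enough for [lam_beta_le] and, through [ln_1p_div_1p_ln], large enough for
   [two_theta_le_lam_ln]. *)
Definition beta_of (x : R) : R := 1 / (64 * (1 + ln (1 + x))).

Section Tuning.
Variable x : R.
Hypothesis x_pos : 0 < x.

Let L := ln (1 + x).
Let lam := lam_of x.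
Let beta := beta_of x.

Let L_pos : 0 < L.
Proof. apply ln_pos. lra. Qed.

Lemma lam_pos : 0 < lam.
Proof. pose proof L_pos. unfold lam, lam_of. fold L. apply Rdiv_lt_0_compat; lra. Qed.

Lemma beta_bounds : 0 < beta <= 1/64.
Proof.
  pose proof L_pos. unfold beta, beta_of. fold L. split; [apply Rdiv_lt_0_compat; lra|].
  apply Rmult_le_reg_r with (64 * (1 + L)); [lra|].
  replace (1 / (64 * (1 + L)) * (64 * (1 + L))) with 1 by (field; lra). nra.
Qed.

Lemma beta_le_lam : beta <= lam / 64.
Proof.
  pose proof L_pos. unfold beta, lam, beta_of, lam_of. fold L.
  apply Rmult_le_reg_r with (64 * L * (1 + L)); [nra|].
  replace (1 / (64 * (1 + L)) * (64 * L * (1 + L))) with L by (field; lra).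
  replace (1 / L / 64 * (64 * L * (1 + L))) with (1 + L) by (field; lra). lra.
Qed.

Lemma one_le_lam_mul : 1 <= lam * x.
Proof.
  pose proof L_pos. pose proof (ln_le_sub_1 (1 + x) ltac:(lra)) as HL. fold L in HL.
  unfold lam, lam_of. fold L.
  replace (1 / L * x) with (x / L) by (field; lra).
  apply Rmult_le_reg_r with L; [lra|]. replace (x / L * L) with x by (field; lra). lra.
Qed.

Lemma two_theta_le_lam_ln : 2 * theta <= lam * ln (1 + beta * x).
Proof.
  pose proof L_pos. pose proof (ln_1p_div_1p_ln x x_pos) as H1. fold L in H1.
  assert (Hx : 0 <= x / (1 + L))
    by (apply Rmult_le_pos; [lra | left; apply Rinv_0_lt_compat; lra]).
  pose proof (ln_1p_div_64 _ Hx) as H2.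
  replace (x / (1 + L) / 64) with (beta * x) in H2 by (unfold beta, beta_of; fold L; field; lra).
  unfold lam, lam_of, theta. fold L.
  replace (1 / L * ln (1 + beta * x)) with (ln (1 + beta * x) / L) by (field; lra).
  apply Rmult_le_reg_r with L; [lra|].
  replace (ln (1 + beta * x) / L * L) with (ln (1 + beta * x)) by (field; lra). lra.
Qed.

Lemma lam_beta_le : lam * beta * x <= 1 + 2 * beta * x.
Proof.
  pose proof L_pos. pose proof beta_bounds.
  pose proof (ln_1p_ge x ltac:(lra)) as HL. fold L in HL.
  assert (x / L <= 1 + x).
  { apply Rmult_le_reg_r with L; [lra|]. replace (x / L * L) with x by (field; lra).
    apply Rmult_le_reg_r with (/ (1 + x)); [apply Rinv_0_lt_compat; lra|].
    replace ((1 + x) * L * / (1 + x)) with L by (field; lra). exact HL. }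
  replace (lam * beta * x) with (beta * (x / L)) by (unfold lam, lam_of; fold L; field; lra).
  nra.
Qed.

End Tuning.

(** * Reachable states of the protocol *)

Section Protocol.
Variables (k : nat) (eps c : R).
Hypotheses (k_ge1 : (1 <= k)%nat) (eps_pos : 0 < eps) (c_ge1 : 1 <= c).

Definition growth : R := sqrt (INR k) * eps / c.
Definition threshold : R := c * sqrt (INR k) / eps.

Lemma INR_k_ge1 : 1 <= INR k.
Proof. apply (le_INR 1), k_ge1. Qed.

Let sqrt_k_pos : 0 < sqrt (INR k).
Proof. apply sqrt_lt_R0. pose proof INR_k_ge1. lra. Qed.

Lemma growth_pos : 0 < growth.
Proof. unfold growth. apply Rdiv_lt_0_compat; [nra | lra]. Qed.

Lemma threshold_pos : 0 < threshold.
Proof. unfold threshold. apply Rdiv_lt_0_compat; [nra | lra]. Qed.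

Lemma threshold_mul_growth : threshold * growth = INR k.
Proof.
  unfold threshold, growth. rewrite <- (sqrt_sqrt (INR k) (pos_INR k)) at 3. field. lra.
Qed.

Lemma round_end_prob_cases m : 0 < m ->
  (m <= threshold /\ Rmin 1 (threshold / m) = 1) \/
  (threshold < m /\ Rmin 1 (threshold / m) = threshold / m /\ threshold / m < 1).
Proof.
  intros Hm. pose proof threshold_pos as HT.
  destruct (Rle_dec m threshold) as [H | H]; [left | right].
  - split; [lra|]. apply Rmin_left.
    apply Rmult_le_reg_r with m; [lra|]. replace (threshold / m * m) with threshold by (field; lra).
    lra.
  - assert (threshold / m < 1).
    { apply Rmult_lt_reg_r with m; [lra|].
      replace (threshold / m * m) with threshold by (field; lra). lra. }
    repeat split; [lra | apply Rmin_right | ]; lra.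
Qed.

Notation total := (total k).
Notation reported := (reported k).
Notation step := (step k eps c).

Lemma step_no_report s i : (i < k)%nat ->
  total (step s i false) = S (total s) /\ reported (step s i false) = reported s /\
  Bctr (step s i false) = Bctr s /\ prob (step s i false) = prob s /\
  rounds (step s i false) = rounds s.
Proof. intros Hi. rewrite total_step by exact Hi. unfold step, reported. simpl. tauto. Qed.

Lemma step_report_mid s i : (i < k)%nat -> S (Bctr s) <> k ->
  total (step s i true) = S (total s) /\ reported (step s i true) = reported s /\
  Bctr (step s i true) = S (Bctr s) /\ prob (step s i true) = prob s /\
  rounds (step s i true) = rounds s.
Proof.
  intros Hi HB. rewrite total_step by exact Hi. unfold step, reported.
  destruct (Nat.eqb_spec (S (Bctr s)) k); [contradiction|]. simpl. tauto.
Qed.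

Lemma step_report_end s i : (i < k)%nat -> S (Bctr s) = k ->
  total (step s i true) = S (total s) /\ reported (step s i true) = S (total s) /\
  Bctr (step s i true) = 0%nat /\
  prob (step s i true) = Rmin 1 (threshold / INR (S (total s))) /\
  rounds (step s i true) = S (rounds s).
Proof.
  intros Hi HB. rewrite total_step by exact Hi. unfold step, reported.
  destruct (Nat.eqb_spec (S (Bctr s)) k); [|contradiction]. simpl.
  rewrite sum_sites_upd_S by exact Hi. fold (total s).
  replace (c * sqrt (INR k) / (eps * INR (S (total s))))
    with (threshold / INR (S (total s))).
  - tauto.
  - unfold threshold. pose proof (lt_0_INR (S (total s)) (Nat.lt_0_succ _)). field. lra.
Qed.

Definition exact_phase (s : state) : Prop :=
  prob s = 1 /\ total s = (reported s + Bctr s)%nat /\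
  INR (reported s) <= threshold /\ reported s = (k * rounds s)%nat.

Definition sampling_phase (s : state) : Prop :=
  threshold < INR (reported s) /\ prob s = threshold / INR (reported s).

Definition protocol_inv (s : state) : Prop :=
  (Bctr s < k)%nat /\ (reported s <= total s)%nat /\ (exact_phase s \/ sampling_phase s).

Lemma protocol_inv_init : protocol_inv init_state.
Proof.
  unfold protocol_inv, exact_phase, reported, total, init_state. simpl.
  rewrite sum_sites_zero. pose proof threshold_pos.
  split; [lia|]. split; [lia|]. left. repeat split; simpl; try lia; lra.
Qed.

Lemma sampling_phase_prob s : sampling_phase s -> 0 < prob s < 1.
Proof.
  intros [H1 ->]. pose proof threshold_pos. split; [apply Rdiv_lt_0_compat; lra|].
  apply Rmult_lt_reg_r with (INR (reported s)); [lra|].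
  replace (threshold / INR (reported s) * INR (reported s)) with threshold by (field; lra). lra.
Qed.

Lemma protocol_inv_prob_valid s : protocol_inv s -> prob_valid s.
Proof.
  intros (_ & _ & [[Hp _] | H]); unfold prob_valid; [lra|].
  pose proof (sampling_phase_prob s H). lra.
Qed.

Lemma protocol_inv_sampling s : protocol_inv s -> prob s < 1 -> sampling_phase s.
Proof. intros (_ & _ & [[Hp _] | H]) Hp1; [lra | exact H]. Qed.

Lemma protocol_inv_exact s : protocol_inv s -> ~ prob s < 1 -> exact_phase s.
Proof.
  intros (_ & _ & [H | H]) Hp1; [exact H|]. pose proof (sampling_phase_prob s H). lra.
Qed.

Lemma protocol_inv_report s i : protocol_inv s -> (i < k)%nat ->
  protocol_inv (step s i true).
Proof.
  intros (HB & Hn & Hphase) Hi. unfold protocol_inv, exact_phase, sampling_phase.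
  destruct (Nat.eq_dec (S (Bctr s)) k) as [E | E].
  - destruct (step_report_end s i Hi E) as (-> & -> & -> & -> & ->).
    split; [lia|]. split; [lia|].
    assert (Hm : 0 < INR (S (total s))) by (apply lt_0_INR; lia).
    destruct (round_end_prob_cases _ Hm) as [(H1 & ->) | (H1 & -> & _)].
    + destruct Hphase as [(_ & Ht & _ & Hr) | (Hlt & _)].
      * left. repeat split; [lia | lra | rewrite Nat.mul_succ_r; lia].
      * exfalso. apply le_INR in Hn. pose proof (le_INR _ _ (Nat.le_succ_diag_r (total s))). lra.
    + right. split; [lra | reflexivity].
  - destruct (step_report_mid s i Hi E) as (-> & -> & -> & -> & ->).
    split; [lia|]. split; [lia|].
    destruct Hphase as [(P1 & P2 & P3 & P4) | P]; [left; repeat split; auto; lia | right; exact P].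
Qed.

Lemma protocol_inv_no_report s i : protocol_inv s -> (i < k)%nat -> prob s <> 1 ->
  protocol_inv (step s i false).
Proof.
  intros (HB & Hn & Hphase) Hi Hp. unfold protocol_inv, exact_phase, sampling_phase.
  destruct (step_no_report s i Hi) as (-> & -> & -> & -> & ->).
  split; [lia|]. split; [lia|].
  destruct Hphase as [[? _] | P]; [contradiction | right; exact P].
Qed.

Lemma exact_phase_rounds_le s : exact_phase s -> INR (rounds s) <= threshold / INR k.
Proof.
  intros (_ & _ & Hle & Hr). rewrite Hr, mult_INR in Hle. pose proof INR_k_ge1.
  apply Rmult_le_reg_l with (INR k); [lra|].
  replace (INR k * (threshold / INR k)) with threshold by (field; lra). lra.
Qed.

Lemma sampling_phase_total_pos s : protocol_inv s -> sampling_phase s -> 0 < INR (total s).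
Proof.
  intros (_ & Hn & _) [Hlt _]. apply le_INR in Hn. pose proof threshold_pos. lra.
Qed.


(** * Lower bound on the expected number of rounds *)

Definition log_growth : R := ln (1 + growth).

Lemma log_growth_pos : 0 < log_growth.
Proof. apply ln_pos. pose proof growth_pos. lra. Qed.

Lemma round_end_count n : 0 < n -> n + INR k / (threshold / n) = n * (1 + growth).
Proof.
  intros Hn. pose proof threshold_pos. rewrite <- threshold_mul_growth. field. lra.
Qed.

(* In the sampling phase [total + (k - B) / p] is the expected count at the end of the
   round; a round end multiplies it by [1 + growth], paid for by [log_growth * rounds]. *)
Definition lower_potential (s : state) : R :=
  if Rlt_dec (prob s) 1
  then ln (INR (total s) + (INR k - INR (Bctr s)) / prob s) - log_growth * INR (rounds s)
  else ln (threshold + 2 * INR k).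

Lemma lower_potential_ge s : protocol_inv s ->
  ln (INR (total s)) - log_growth * INR (rounds s) <= lower_potential s.
Proof.
  intros HI. unfold lower_potential.
  pose proof (pos_INR (rounds s)). pose proof log_growth_pos.
  assert (0 <= log_growth * INR (rounds s)) by (apply Rmult_le_pos; lra).
  pose proof HI as (HB & _). apply lt_INR in HB.
  destruct (Rlt_dec (prob s) 1) as [Hp | Hp].
  - pose proof (protocol_inv_sampling s HI Hp) as HS.
    pose proof (sampling_phase_prob s HS). pose proof (sampling_phase_total_pos s HI HS).
    assert (0 <= (INR k - INR (Bctr s)) / prob s)
      by (apply Rmult_le_pos; [lra | left; apply Rinv_0_lt_compat; lra]).
    assert (ln (INR (total s)) <= ln (INR (total s) + (INR k - INR (Bctr s)) / prob s))
      by (apply ln_le; lra).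
    lra.
  - destruct (protocol_inv_exact s HI Hp) as (_ & Ht & Hle & _).
    assert (INR (total s) <= threshold + INR k) by (rewrite Ht, plus_INR; lra).
    pose proof INR_k_ge1. pose proof threshold_pos.
    destruct (pos_INR (total s)) as [Hpos | Hz].
    + assert (ln (INR (total s)) <= ln (threshold + 2 * INR k)) by (apply ln_le; lra). lra.
    + rewrite <- Hz, ln_0. pose proof (ln_nonneg (threshold + 2 * INR k) ltac:(lra)). lra.
Qed.

Lemma lower_potential_report_sampling s i : protocol_inv s -> (i < k)%nat -> prob s < 1 ->
  lower_potential (step s i true)
  = ln (INR (total s) + (INR k - INR (Bctr s) - 1) / prob s + 1) - log_growth * INR (rounds s).
Proof.
  intros HI Hi Hp. pose proof HI as (HB & Hn & _). pose proof threshold_pos.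
  destruct (protocol_inv_sampling s HI Hp) as [Hlt Hpe].
  pose proof (sampling_phase_prob s (conj Hlt Hpe)).
  destruct (Nat.eq_dec (S (Bctr s)) k) as [E | E].
  - destruct (step_report_end s i Hi E) as (A1 & _ & A3 & A4 & A5).
    unfold lower_potential. rewrite A1, A3, A4, A5.
    assert (Hm : threshold < INR (S (total s))).
    { eapply Rlt_le_trans; [exact Hlt | apply le_INR; lia]. }
    destruct (round_end_prob_cases (INR (S (total s))) ltac:(lra)) as [(? & _) | (_ & -> & Hlt1)];
      [lra|].
    destruct (Rlt_dec (threshold / INR (S (total s))) 1); [|contradiction].
    replace (INR k - INR 0) with (INR k) by (simpl; ring).
    rewrite round_end_count, ln_mult by (try pose proof growth_pos; lra).
    assert (HkB : INR k - INR (Bctr s) - 1 = 0) by (rewrite <- E, S_INR; ring).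
    rewrite HkB, !S_INR.
    replace (INR (total s) + 0 / prob s + 1) with (INR (total s) + 1) by (field; lra).
    fold log_growth. ring.
  - destruct (step_report_mid s i Hi E) as (A1 & _ & A3 & A4 & A5).
    unfold lower_potential. rewrite A1, A3, A4, A5.
    destruct (Rlt_dec (prob s) 1); [|contradiction].
    rewrite !S_INR. f_equal. f_equal. field. lra.
Qed.

Lemma lower_potential_drift_sampling s i : protocol_inv s -> (i < k)%nat -> prob s < 1 ->
  prob s * lower_potential (step s i true) + (1 - prob s) * lower_potential (step s i false)
  <= lower_potential s.
Proof.
  intros HI Hi Hp. pose proof HI as (HB & _).
  pose proof (sampling_phase_prob s (protocol_inv_sampling s HI Hp)) as Hp0.
  pose proof (sampling_phase_total_pos s HI (protocol_inv_sampling s HI Hp)).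
  assert (HBk : INR (Bctr s) + 1 <= INR k) by (rewrite <- S_INR; apply le_INR; lia).
  assert (0 <= (INR k - INR (Bctr s) - 1) / prob s)
    by (apply Rmult_le_pos; [lra | left; apply Rinv_0_lt_compat; lra]).
  set (M := INR (total s) + (INR k - INR (Bctr s)) / prob s).
  assert (Ef : lower_potential (step s i false) = ln (M + 1) - log_growth * INR (rounds s)).
  { destruct (step_no_report s i Hi) as (A1 & _ & A3 & A4 & A5).
    unfold lower_potential. rewrite A1, A3, A4, A5.
    destruct (Rlt_dec (prob s) 1); [|contradiction].
    unfold M. rewrite S_INR. f_equal. f_equal. ring. }
  assert (Et : lower_potential (step s i true)
               = ln (M + 1 - 1 / prob s) - log_growth * INR (rounds s)).
  { rewrite lower_potential_report_sampling by assumption.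
    unfold M. f_equal. f_equal. field. lra. }
  assert (HM : M + 1 - 1 / prob s = INR (total s) + (INR k - INR (Bctr s) - 1) / prob s + 1)
    by (unfold M; field; lra).
  assert (0 < 1 / prob s) by (apply Rdiv_lt_0_compat; lra).
  pose proof (ln_concave (prob s) (M + 1 - 1 / prob s) (M + 1) ltac:(lra)
    ltac:(lra) ltac:(lra)) as Hc.
  replace (prob s * (M + 1 - 1 / prob s) + (1 - prob s) * (M + 1)) with M in Hc
    by (field; lra).
  rewrite Et, Ef. unfold lower_potential. destruct (Rlt_dec (prob s) 1); [|contradiction].
  fold M. nra.
Qed.

Lemma lower_potential_drift_exact s i : protocol_inv s -> (i < k)%nat -> ~ prob s < 1 ->
  prob s * lower_potential (step s i true) + (1 - prob s) * lower_potential (step s i false)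
  <= lower_potential s.
Proof.
  intros HI Hi Hp. pose proof HI as (HB & _).
  destruct (protocol_inv_exact s HI Hp) as (Hp1 & Ht & Hle & _).
  rewrite Hp1. unfold lower_potential at 3. destruct (Rlt_dec (prob s) 1); [contradiction|].
  replace (1 - 1) with 0 by ring. rewrite Rmult_0_l, Rmult_1_l, Rplus_0_r.
  destruct (Nat.eq_dec (S (Bctr s)) k) as [E | E].
  - destruct (step_report_end s i Hi E) as (A1 & _ & A3 & A4 & A5).
    assert (Hm : 0 < INR (S (total s))) by (apply lt_0_INR; lia).
    unfold lower_potential. rewrite A1, A3, A4, A5.
    destruct (round_end_prob_cases _ Hm) as [(_ & ->) | (_ & -> & Hlt1)].
    { destruct (Rlt_dec 1 1); lra. }
    destruct (Rlt_dec (threshold / INR (S (total s))) 1); [|contradiction].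
    replace (INR k - INR 0) with (INR k) by (simpl; ring).
    rewrite round_end_count, ln_mult, !S_INR by (try pose proof growth_pos; lra).
    fold log_growth. pose proof threshold_pos. pose proof INR_k_ge1.
    assert (INR (total s) + 1 <= threshold + 2 * INR k).
    { rewrite Ht, plus_INR. apply lt_INR in HB. lra. }
    assert (ln (INR (total s) + 1) <= ln (threshold + 2 * INR k))
      by (apply ln_le; [pose proof (pos_INR (total s)) |]; lra).
    pose proof (pos_INR (rounds s)). pose proof log_growth_pos.
    assert (0 <= log_growth * INR (rounds s)) by (apply Rmult_le_pos; lra). lra.
  - destruct (step_report_mid s i Hi E) as (_ & _ & _ & A4 & _).
    unfold lower_potential. rewrite A4. destruct (Rlt_dec (prob s) 1); [contradiction | lra].
Qed.

Lemma expected_rounds_lower adv : (forall h, (adv h < k)%nat) -> forall N, (1 <= N)%nat ->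
  ln (INR N) - log_growth * ERounds k eps c adv N <= ln (threshold + 2 * INR k).
Proof.
  intros Hadv N HN.
  assert (Hsuper : expect k eps c adv N [] init_state
                     (fun s => ln (INR (total s)) - log_growth * INR (rounds s))
                   <= lower_potential init_state).
  { apply (expect_le_supermartingale k eps c adv Hadv protocol_inv).
    - exact protocol_inv_prob_valid.
    - intros s i HI Hi _. exact (protocol_inv_report s i HI Hi).
    - exact protocol_inv_no_report.
    - intros s i HI Hi. destruct (Rlt_dec (prob s) 1).
      + apply lower_potential_drift_sampling; assumption.
      + apply lower_potential_drift_exact; assumption.
    - exact lower_potential_ge.
    - exact protocol_inv_init. }
  assert (Hinit : lower_potential init_state = ln (threshold + 2 * INR k)).
  { unfold lower_potential. simpl. destruct (Rlt_dec 1 1); [lra | reflexivity]. }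
  rewrite (expect_ext k eps c adv Hadv N [] init_state _
             (fun s => - log_growth * INR (rounds s) + ln (INR N))) in Hsuper.
  - rewrite expect_affine in Hsuper. unfold ERounds. lra.
  - intros s' ->. unfold total, init_state. simpl. rewrite sum_sites_zero. simpl. ring.
Qed.

Lemma expected_rounds_ge_half_rate : exists N0 : nat,
  forall adv : adversary, (forall h, (adv h < k)%nat) -> forall N : nat, (N0 <= N)%nat ->
  1 / 2 * rate k eps c N <= ERounds k eps c adv N.
Proof.
  destruct (ln_INR_eventually_ge (2 * ln (threshold + 2 * INR k))) as [N0 HN0].
  exists N0. intros adv Hadv N HN. destruct (HN0 N HN) as [HN1 HlnN].
  pose proof (expected_rounds_lower adv Hadv N HN1). pose proof log_growth_pos.
  change (rate k eps c N) with (ln (INR N) / log_growth).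
  apply Rmult_le_reg_r with log_growth; [lra|].
  replace (1 / 2 * (ln (INR N) / log_growth) * log_growth) with (ln (INR N) / 2)
    by (field; lra).
  lra.
Qed.

(** * Exponential moment of the number of rounds *)

Notation lam := (lam_of growth).
Notation beta := (beta_of growth).

Lemma sampling_weight_le s : protocol_inv s -> prob s < 1 ->
  (INR k - INR (Bctr s)) / prob s <= growth * INR (total s).
Proof.
  intros HI Hp. destruct (protocol_inv_sampling s HI Hp) as [Hlt Hpe].
  pose proof threshold_pos. pose proof growth_pos. pose proof (pos_INR (Bctr s)).
  destruct HI as (HB & Hn & _). apply lt_INR in HB. apply le_INR in Hn.
  rewrite Hpe. replace ((INR k - INR (Bctr s)) / (threshold / INR (reported s)))
    with (INR (reported s) * ((INR k - INR (Bctr s)) / threshold)) by (field; lra).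
  assert (0 <= (INR k - INR (Bctr s)) / threshold <= growth).
  { split; [apply Rmult_le_pos; [lra | left; apply Rinv_0_lt_compat; lra]|].
    apply Rmult_le_reg_r with threshold; [lra|].
    replace ((INR k - INR (Bctr s)) / threshold * threshold) with (INR k - INR (Bctr s))
      by (field; lra).
    rewrite <- threshold_mul_growth. lra. }
  apply Rle_trans with (INR (reported s) * growth); [apply Rmult_le_compat_l; lra|].
  rewrite Rmult_comm. apply Rmult_le_compat_l; lra.
Qed.

Lemma lam_report_weight_le s : protocol_inv s -> prob s < 1 ->
  lam * (beta / prob s) <= INR (total s) + 2 * (beta / prob s).
Proof.
  intros HI Hp. destruct (protocol_inv_sampling s HI Hp) as [Hlt Hpe].
  pose proof threshold_pos. pose proof growth_pos. pose proof INR_k_ge1.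
  pose proof (beta_bounds growth growth_pos). pose proof (lam_pos growth growth_pos).
  pose proof (lam_beta_le growth growth_pos).
  destruct HI as (_ & Hn & _). apply le_INR in Hn.
  assert (Hlb : lam * beta <= threshold + 2 * beta).
  { apply Rmult_le_reg_r with growth; [lra|].
    rewrite Rmult_plus_distr_r, threshold_mul_growth. nra. }
  rewrite Hpe. set (q := INR (reported s) / threshold).
  assert (0 < q) by (apply Rdiv_lt_0_compat; lra).
  replace (beta / (threshold / INR (reported s))) with (q * beta) by (unfold q; field; lra).
  replace (lam * (q * beta)) with (q * (lam * beta)) by ring.
  apply Rle_trans with (q * (threshold + 2 * beta)); [apply Rmult_le_compat_l; lra|].
  rewrite Rmult_plus_distr_l.
  replace (q * threshold) with (INR (reported s)) by (unfold q; field; lra). lra.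
Qed.

Definition upper_count (s : state) : R :=
  INR (total s) + beta * (INR k - INR (Bctr s)) / prob s.

Definition exact_phase_bound : R := exp (theta * (threshold / INR k + 2)).

Definition round_end_factor : R := exp (theta - lam * ln (1 + beta * growth)).

(* [exp (theta * rounds) * upper_count ^ (- lam)] is a supermartingale in the sampling
   phase: a round end gains [exp theta] but multiplies [upper_count] by about
   [1 + beta * growth], and [two_theta_le_lam_ln] makes that a net loss. *)
Definition upper_potential (s : state) : R :=
  if Rlt_dec (prob s) 1
  then exp (theta * (INR (rounds s) + 1)) * exp (- lam * ln (upper_count s))
  else exact_phase_bound.

Lemma upper_potential_ge s : protocol_inv s ->
  round_end_factor * exp (theta * INR (rounds s)) * exp (- lam * ln (INR (total s)))
  <= upper_potential s.
Proof.
  intros HI. unfold upper_potential, round_end_factor.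
  pose proof growth_pos. pose proof (lam_pos growth growth_pos).
  pose proof (beta_bounds growth growth_pos).
  destruct (Rlt_dec (prob s) 1) as [Hp | Hp].
  - pose proof (sampling_phase_prob s (protocol_inv_sampling s HI Hp)).
    pose proof (sampling_phase_total_pos s HI (protocol_inv_sampling s HI Hp)).
    pose proof (sampling_weight_le s HI Hp) as Hw. pose proof HI as (HB & _).
    apply lt_INR in HB.
    assert (0 <= (INR k - INR (Bctr s)) / prob s)
      by (apply Rmult_le_pos; [lra | left; apply Rinv_0_lt_compat; lra]).
    assert (ln (upper_count s) <= ln (INR (total s)) + ln (1 + beta * growth)).
    { rewrite <- ln_mult by nra. unfold upper_count, Rdiv. rewrite Rmult_assoc.
      apply ln_le; nra. }
    rewrite <- !exp_plus. apply exp_le.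
    assert (lam * ln (upper_count s) <= lam * (ln (INR (total s)) + ln (1 + beta * growth)))
      by (apply Rmult_le_compat_l; lra).
    lra.
  - pose proof (exact_phase_rounds_le s (protocol_inv_exact s HI Hp)).
    assert (exp (- lam * ln (INR (total s))) <= 1).
    { apply exp_le_1. destruct (pos_INR (total s)) as [Hpos | Hz].
      - assert (Hge1 : 1 <= INR (total s)).
        { destruct (total s); [simpl in Hpos; lra | apply (le_INR 1); lia]. }
        pose proof (ln_nonneg _ Hge1). nra.
      - rewrite <- Hz, ln_0. lra. }
    rewrite <- exp_plus.
    assert (exp (theta - lam * ln (1 + beta * growth) + theta * INR (rounds s))
            <= exact_phase_bound).
    { unfold exact_phase_bound. apply exp_le.
      pose proof (two_theta_le_lam_ln growth growth_pos). unfold theta in *. lra. }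
    pose proof (exp_pos (theta - lam * ln (1 + beta * growth) + theta * INR (rounds s))).
    nra.
Qed.

Lemma upper_count_no_report s i : (i < k)%nat ->
  upper_count (step s i false) = upper_count s + 1.
Proof.
  intros Hi. destruct (step_no_report s i Hi) as (A1 & _ & A3 & A4 & _).
  unfold upper_count. rewrite A1, A3, A4, S_INR. ring.
Qed.

Lemma upper_count_report_mid s i : (i < k)%nat -> S (Bctr s) <> k -> prob s <> 0 ->
  upper_count (step s i true) = upper_count s + 1 - beta / prob s.
Proof.
  intros Hi E Hp. destruct (step_report_mid s i Hi E) as (A1 & _ & A3 & A4 & _).
  unfold upper_count. rewrite A1, A3, A4, !S_INR. field. exact Hp.
Qed.

Lemma round_end_sampling s i : (i < k)%nat -> S (Bctr s) = k ->
  threshold < INR (S (total s)) ->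
  prob (step s i true) < 1 /\
  upper_count (step s i true) = INR (S (total s)) * (1 + beta * growth).
Proof.
  intros Hi E Hlt. destruct (step_report_end s i Hi E) as (A1 & _ & A3 & A4 & _).
  pose proof threshold_pos.
  destruct (round_end_prob_cases (INR (S (total s))) ltac:(lra)) as [(? & _) | (_ & Hmin & Hp)];
    [lra|].
  rewrite A4, Hmin. split; [exact Hp|].
  unfold upper_count. rewrite A1, A3, A4, Hmin. simpl (INR 0).
  rewrite <- threshold_mul_growth. field. lra.
Qed.

Lemma upper_potential_sampling s : prob s < 1 ->
  upper_potential s = exp (theta * (INR (rounds s) + 1)) * exp (- lam * ln (upper_count s)).
Proof. intros Hp. unfold upper_potential. destruct (Rlt_dec (prob s) 1); [reflexivity | contradiction]. Qed.

Lemma upper_potential_drift_mid s i : protocol_inv s -> (i < k)%nat -> prob s < 1 ->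
  S (Bctr s) <> k ->
  prob s * upper_potential (step s i true) + (1 - prob s) * upper_potential (step s i false)
  <= upper_potential s.
Proof.
  intros HI Hi Hp E. pose proof HI as (HB & _).
  pose proof (sampling_phase_prob s (protocol_inv_sampling s HI Hp)) as Hp0.
  pose proof (sampling_phase_total_pos s HI (protocol_inv_sampling s HI Hp)).
  pose proof (lam_report_weight_le s HI Hp) as Hla.
  pose proof (beta_bounds growth growth_pos). pose proof (lam_pos growth growth_pos).
  destruct (step_report_mid s i Hi E) as (_ & _ & _ & Pt & Rt).
  destruct (step_no_report s i Hi) as (_ & _ & _ & Pf & Rf).
  rewrite !upper_potential_sampling by (rewrite ?Pt, ?Pf; exact Hp). rewrite Rt, Rf.
  rewrite upper_count_report_mid, upper_count_no_report by (auto; lra).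
  set (a := beta / prob s) in *.
  assert (HkB : 2 <= INR k - INR (Bctr s)).
  { assert (Hle : (S (S (Bctr s)) <= k)%nat) by lia.
    apply le_INR in Hle. rewrite !S_INR in Hle. lra. }
  assert (HM : upper_count s = INR (total s) + (INR k - INR (Bctr s)) * a)
    by (unfold upper_count, a; field; lra).
  assert (0 < a) by (apply Rdiv_lt_0_compat; lra).
  assert (2 * a <= (INR k - INR (Bctr s)) * a) by (apply Rmult_le_compat_r; lra).
  pose proof (power_potential_step_report (prob s) a lam beta (upper_count s) ltac:(lra)
    ltac:(lra) ltac:(lra) ltac:(unfold a; field; lra) ltac:(lra) ltac:(lra)) as Hstep.
  pose proof (exp_pos (theta * (INR (rounds s) + 1))).
  set (cc := exp (theta * (INR (rounds s) + 1))) in *. nra.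
Qed.

Lemma upper_potential_drift_end s i : protocol_inv s -> (i < k)%nat -> prob s < 1 ->
  S (Bctr s) = k ->
  prob s * upper_potential (step s i true) + (1 - prob s) * upper_potential (step s i false)
  <= upper_potential s.
Proof.
  intros HI Hi Hp E. pose proof HI as (_ & Hn & _).
  destruct (protocol_inv_sampling s HI Hp) as [Hlt Hpe].
  pose proof (sampling_phase_prob s (conj Hlt Hpe)) as Hp0.
  pose proof (sampling_phase_total_pos s HI (conj Hlt Hpe)) as Hn0.
  pose proof (sampling_weight_le s HI Hp) as Hw.
  pose proof growth_pos as Hx. pose proof (lam_pos growth Hx).
  pose proof (beta_bounds growth Hx) as Hb.
  assert (Hm : threshold < INR (S (total s))).
  { eapply Rlt_le_trans; [exact Hlt | apply le_INR; lia]. }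
  destruct (round_end_sampling s i Hi E Hm) as [Pt Ct].
  destruct (step_report_end s i Hi E) as (_ & _ & _ & _ & Rt).
  destruct (step_no_report s i Hi) as (_ & _ & _ & Pf & Rf).
  rewrite !upper_potential_sampling by (rewrite ?Pf; assumption).
  rewrite Rt, Rf, Ct, upper_count_no_report by exact Hi.
  assert (HkB : INR k - INR (Bctr s) = 1) by (rewrite <- E, S_INR; ring).
  set (a := beta / prob s).
  assert (HM : upper_count s = INR (total s) + a)
    by (unfold upper_count, a; rewrite HkB; field; lra).
  rewrite HkB in Hw.
  assert (Ha : a <= beta * growth * INR (total s)).
  { unfold a. replace (beta / prob s) with (beta * (1 / prob s)) by (field; lra).
    rewrite Rmult_assoc. apply Rmult_le_compat_l; lra. }
  pose proof (power_potential_step_round_end (prob s) a lam beta theta growth (INR (total s))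
    Hp0 Hb (beta_le_lam growth Hx) Hx (one_le_lam_mul growth Hx)
    ltac:(unfold theta; lra) (two_theta_le_lam_ln growth Hx)
    ltac:(unfold a; field; lra) Hn0 Ha) as Hstep.
  rewrite HM, (S_INR (total s)), ln_mult by nra.
  replace (exp (theta * (INR (S (rounds s)) + 1)) *
           exp (- lam * (ln (INR (total s) + 1) + ln (1 + beta * growth))))
    with (exp (theta * (INR (rounds s) + 1)) *
          exp (theta - lam * ln (1 + beta * growth) - lam * ln (INR (total s) + 1)))
    by (rewrite S_INR, <- !exp_plus; f_equal; ring).
  pose proof (exp_pos (theta * (INR (rounds s) + 1))).
  set (cc := exp (theta * (INR (rounds s) + 1))) in *. nra.
Qed.

Lemma upper_potential_drift_exact s i : protocol_inv s -> (i < k)%nat -> ~ prob s < 1 ->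
  prob s * upper_potential (step s i true) + (1 - prob s) * upper_potential (step s i false)
  <= upper_potential s.
Proof.
  intros HI Hi Hp. pose proof (exact_phase_rounds_le s (protocol_inv_exact s HI Hp)) as HR.
  destruct (protocol_inv_exact s HI Hp) as (Hp1 & _).
  rewrite Hp1. unfold upper_potential at 3. destruct (Rlt_dec (prob s) 1); [contradiction|].
  replace (1 - 1) with 0 by ring. rewrite Rmult_0_l, Rmult_1_l, Rplus_0_r.
  unfold upper_potential. destruct (Rlt_dec (prob (step s i true)) 1) as [Q | Q]; [|lra].
  destruct (Nat.eq_dec (S (Bctr s)) k) as [E | E].
  2:{ destruct (step_report_mid s i Hi E) as (_ & _ & _ & A4 & _). lra. }
  destruct (step_report_end s i Hi E) as (_ & _ & _ & A4 & ->).
  assert (Hm : 0 < INR (S (total s))) by (apply lt_0_INR; lia).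
  destruct (round_end_prob_cases _ Hm) as [(_ & Hmin) | (Hlt & _)]; [rewrite A4, Hmin in Q; lra|].
  destruct (round_end_sampling s i Hi E Hlt) as [_ ->].
  pose proof growth_pos. pose proof (lam_pos growth growth_pos).
  pose proof (beta_bounds growth growth_pos).
  assert (exp (- lam * ln (INR (S (total s)) * (1 + beta * growth))) <= 1).
  { apply exp_le_1. assert (1 <= INR (S (total s))) by (apply (le_INR 1); lia).
    assert (0 <= beta * growth) by (apply Rmult_le_pos; lra).
    pose proof (ln_nonneg (INR (S (total s)) * (1 + beta * growth)) ltac:(nra)). nra. }
  assert (exp (theta * (INR (S (rounds s)) + 1)) <= exact_phase_bound).
  { unfold exact_phase_bound. apply exp_le. rewrite S_INR. unfold theta. lra. }
  pose proof (exp_pos (theta * (INR (S (rounds s)) + 1))).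
  pose proof (exp_pos (- lam * ln (INR (S (total s)) * (1 + beta * growth)))). nra.
Qed.

Lemma upper_potential_drift s i : protocol_inv s -> (i < k)%nat ->
  prob s * upper_potential (step s i true) + (1 - prob s) * upper_potential (step s i false)
  <= upper_potential s.
Proof.
  intros HI Hi. destruct (Rlt_dec (prob s) 1) as [Hp | Hp].
  - destruct (Nat.eq_dec (S (Bctr s)) k).
    + apply upper_potential_drift_end; assumption.
    + apply upper_potential_drift_mid; assumption.
  - apply upper_potential_drift_exact; assumption.
Qed.

Lemma exp_rounds_moment_upper adv : (forall h, (adv h < k)%nat) -> forall N, (1 <= N)%nat ->
  expect k eps c adv N [] init_state (fun s => exp (theta * INR (rounds s)))
  <= exact_phase_bound / round_end_factor * exp (lam * ln (INR N)).
Proof.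
  intros Hadv N HN.
  assert (Hsuper : expect k eps c adv N [] init_state
     (fun s => round_end_factor * exp (theta * INR (rounds s)) * exp (- lam * ln (INR (total s))))
     <= upper_potential init_state).
  { apply (expect_le_supermartingale k eps c adv Hadv protocol_inv).
    - exact protocol_inv_prob_valid.
    - intros s i HI Hi _. exact (protocol_inv_report s i HI Hi).
    - exact protocol_inv_no_report.
    - exact upper_potential_drift.
    - exact upper_potential_ge.
    - exact protocol_inv_init. }
  assert (Hinit : upper_potential init_state = exact_phase_bound).
  { unfold upper_potential. simpl. destruct (Rlt_dec 1 1); [lra | reflexivity]. }
  rewrite (expect_ext k eps c adv Hadv N [] init_state _
    (fun s => (round_end_factor * exp (- lam * ln (INR N))) * exp (theta * INR (rounds s)) + 0))
    in Hsuper.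
  2:{ intros s' ->. unfold total, init_state. simpl. rewrite sum_sites_zero. simpl. ring. }
  rewrite expect_affine, Hinit, Rplus_0_r in Hsuper.
  assert (Hf : 0 < round_end_factor) by apply exp_pos.
  assert (Hinv : exp (- lam * ln (INR N)) * exp (lam * ln (INR N)) = 1)
    by (rewrite <- exp_plus, <- exp_0; f_equal; ring).
  pose proof (exp_pos (lam * ln (INR N))). pose proof (exp_pos (- lam * ln (INR N))).
  apply Rmult_le_reg_l with (round_end_factor * exp (- lam * ln (INR N))); [nra|].
  replace (round_end_factor * exp (- lam * ln (INR N))
           * (exact_phase_bound / round_end_factor * exp (lam * ln (INR N))))
    with (exact_phase_bound * (exp (- lam * ln (INR N)) * exp (lam * ln (INR N))))
    by (field; lra).
  rewrite Hinv, Rmult_1_r. exact Hsuper.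
Qed.

Lemma exp_rounds_moment_le_rate : exists N0 : nat,
  forall adv : adversary, (forall h, (adv h < k)%nat) -> forall N : nat, (N0 <= N)%nat ->
  expect k eps c adv N [] init_state (fun s => exp (theta * INR (rounds s)))
  <= exp (2 * rate k eps c N).
Proof.
  set (K := exact_phase_bound / round_end_factor).
  assert (HK : 0 < K) by (apply Rdiv_lt_0_compat; apply exp_pos).
  destruct (ln_INR_eventually_ge (log_growth * ln K)) as [N0 HN0].
  exists N0. intros adv Hadv N HN. destruct (HN0 N HN) as [HN1 HlnN].
  pose proof log_growth_pos.
  eapply Rle_trans; [apply (exp_rounds_moment_upper adv Hadv N HN1)|]. fold K.
  change (rate k eps c N) with (ln (INR N) / log_growth).
  replace (lam * ln (INR N)) with (ln (INR N) / log_growth)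
    by (unfold lam_of; fold log_growth; field; lra).
  assert (ln K <= ln (INR N) / log_growth).
  { apply Rmult_le_reg_r with log_growth; [lra|].
    replace (ln (INR N) / log_growth * log_growth) with (ln (INR N)) by (field; lra). lra. }
  rewrite <- (exp_ln K) at 1 by exact HK. rewrite <- exp_plus. apply exp_le. lra.
Qed.

End Protocol.

(** * From the exponential moment to the mean and the tail *)

Lemma prob_valid_init : prob_valid init_state.
Proof. unfold prob_valid. simpl. lra. Qed.

Section Moments.
Variables (k : nat) (eps c : R) (adv : adversary) (N : nat) (t m : R).
Hypotheses (adv_valid : forall h, (adv h < k)%nat) (c_ge0 : 0 <= c) (eps_pos : 0 < eps).
Hypothesis t_pos : 0 < t.
Hypothesis moment_le :
  expect k eps c adv N [] init_state (fun s => exp (t * INR (rounds s))) <= exp m.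

Lemma expected_rounds_le_of_moment : ERounds k eps c adv N <= m / t.
Proof.
  pose proof (expect_le_ln_expect_exp k eps c adv c_ge0 eps_pos N [] init_state
    (fun s => t * INR (rounds s)) prob_valid_init) as J.
  rewrite (expect_ext k eps c adv adv_valid N [] init_state _
    (fun s => t * INR (rounds s) + 0)), expect_affine in J by (intros; ring).
  pose proof (expect_pos k eps c adv c_ge0 eps_pos N [] init_state _ prob_valid_init
    (fun s => exp_pos (t * INR (rounds s)))).
  assert (ln (expect k eps c adv N [] init_state (fun s => exp (t * INR (rounds s)))) <= m)
    by (rewrite <- (ln_exp m); apply ln_le; assumption).
  unfold ERounds. apply Rmult_le_reg_l with t; [lra|].
  replace (t * (m / t)) with m by (field; lra). lra.
Qed.

(* Markov's inequality for [exp (t * rounds)]. *)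
Lemma rounds_tail_of_moment delta r : 0 < delta < 1 -> m + ln (1 / delta) <= t * r ->
  PRoundsLe k eps c adv N r >= 1 - delta.
Proof.
  intros Hd Hr. unfold PRoundsLe.
  assert (Hind : forall s, - exp (- t * r) * exp (t * INR (rounds s)) + 1
                           <= (if Rle_dec (INR (rounds s)) r then 1 else 0)).
  { intros s. pose proof (exp_pos (- t * r)). pose proof (exp_pos (t * INR (rounds s))).
    destruct (Rle_dec (INR (rounds s)) r) as [Hle | Hgt].
    - assert (0 < exp (- t * r) * exp (t * INR (rounds s))) by (apply Rmult_lt_0_compat; lra).
      lra.
    - assert (1 <= exp (- t * r) * exp (t * INR (rounds s))).
      { rewrite <- exp_plus, <- exp_0 at 1. apply exp_le. nra. }
      lra. }
  pose proof (expect_mono k eps c adv c_ge0 eps_pos N [] init_state _ _ prob_valid_init Hind)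
    as Hmono.
  rewrite expect_affine in Hmono.
  assert (exp (- t * r) * exp m <= delta).
  { rewrite <- exp_plus, <- (exp_ln delta) by lra. apply exp_le.
    unfold Rdiv in Hr. rewrite Rmult_1_l, ln_Rinv in Hr by lra. lra. }
  assert (exp (- t * r) * expect k eps c adv N [] init_state (fun s => exp (t * INR (rounds s)))
          <= exp (- t * r) * exp m)
    by (apply Rmult_le_compat_l; [left; apply exp_pos | exact moment_le]).
  lra.
Qed.

End Moments.

Theorem mainTheorem7 :
  exists C1 C2 C3 : R, 0 < C1 /\ 0 < C2 /\ 0 < C3 /\
  forall (k : nat) (eps c : R),
    (1 <= k)%nat -> 0 < eps -> 1 <= c ->
    exists N0 : nat,
    forall (adv : adversary),
      (forall h, (adv h < k)%nat) ->
      forall N : nat, (N0 <= N)%nat ->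
        C1 * rate k eps c N <= ERounds k eps c adv N <= C2 * rate k eps c N /\
        forall delta : R, 0 < delta < 1 ->
          PRoundsLe k eps c adv N (C3 * (rate k eps c N + ln (1 / delta)))
            >= 1 - delta.
Proof.
  exists (1 / 2), 512, 512. split; [lra|]. split; [lra|]. split; [lra|].
  intros k eps c Hk He Hc.
  destruct (expected_rounds_ge_half_rate k eps c Hk He Hc) as [N1 Hlower].
  destruct (exp_rounds_moment_le_rate k eps c Hk He Hc) as [N2 Hmoment].
  exists (Nat.max N1 N2). intros adv Hadv N HN.
  pose proof (Hmoment adv Hadv N ltac:(lia)) as Hm.
  assert (Htheta : 0 < theta) by (unfold theta; lra).
  split; [split|].
  - exact (Hlower adv Hadv N ltac:(lia)).
  - replace (512 * rate k eps c N) with (2 * rate k eps c N / theta) by (unfold theta; field).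
    exact (expected_rounds_le_of_moment k eps c adv N theta _ Hadv ltac:(lra) He Htheta Hm).
  - intros delta Hd.
    apply (rounds_tail_of_moment k eps c adv N theta (2 * rate k eps c N)); try assumption; try lra.
    assert (0 < ln (1 / delta)).
    { apply ln_pos. apply Rmult_lt_reg_r with delta; [lra|].
      replace (1 / delta * delta) with 1 by (field; lra). lra. }
    unfold theta. lra.
Qed.
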